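(* (1) For every $2\le n<\omega$, the algebra $K_n$ is a simple regular pseudocomplemented Kleene algebra of range $2$, i.e. a simple algebra of $\mathbf{K}_2$. (2) For $2\le n,m<\omega$, if $K_n$ is isomorphic to a subalgebra of $K_m$, then $n=m$.
   Context: For $2\le n<\omega$ let $A_n=\{a_i:0\le i<n\}$, $B_n=\{b_i:0\le i<n\}$ be disjoint, $S_n=A_n\cup B_n$, and $\zeta(S_n)$ a disjoint copy of $S_n$, with $\zeta$ interchanging each $s\in S_n$ and its copy $\zeta(s)$. $P_n=S_n\cup\zeta(S_n)$ (discrete topology) is ordered by the partial order whose only strict comparabilities are, for $0\le i,j<n$: $a_i<\zeta(a_j)$, $b_i<\zeta(b_j)$, $a_i<\zeta(b_j)$ iff $i\ne j$, $b_i<\zeta(a_j)$ iff $i\ne j$. $K_n$ is the dual algebra of $P_n$: the decreasing subsets $X$ of $P_n$ with $\cap,\cup,\emptyset,P_n$, $X^\ast=P_n\setminus[X)$ and $X'=P_n\setminus\zeta(X)$. $\mathbf{K}_2$ is the variety of pseudocomplemented de Morgan algebras (bounded distributive lattice with pseudocomplement ${}^\ast$ and de Morgan involution ${}^\prime$) satisfying $x\wedge x^{\prime\ast\prime}\le y\vee y^\ast$, $x\wedge x'\le y\vee y'$, and $(x\wedge x^{\prime\ast})^{2(\prime\ast)}=(x\wedge x^{\prime\ast})^{3(\prime\ast)}$, where $x^{0(\prime\ast)}=x$, $x^{(k+1)(\prime\ast)}=((x^{k(\prime\ast)})')^\ast$. *)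

From HB Require Import structures.
From mathcomp Require Import all_boot.
Set Implicit Arguments. Unset Strict Implicit. Unset Printing Implicit Defensive.

(* A pseudocomplemented de Morgan algebra signature:
   (L; join, meet, bot, top, pseudocomplement *, de Morgan involution ') *)
Record pdmAlg := PdmAlg {
  car :> Type;
  jn : car -> car -> car;
  mt : car -> car -> car;
  bt : car;
  tp : car;
  st : car -> car;
  pr : car -> car
}.

Definition ale (A : pdmAlg) (x y : A) : Prop := mt x y = x.

Definition pst_iter (A : pdmAlg) (k : nat) (x : A) : A := iter k (fun y => st (pr y)) x.

Definition in_K2 (A : pdmAlg) : Prop :=
  (forall x y z : A, jn x (jn y z) = jn (jn x y) z) /\
  (forall x y z : A, mt x (mt y z) = mt (mt x y) z) /\
  (forall x y : A, jn x y = jn y x) /\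
  (forall x y : A, mt x y = mt y x) /\
  (forall x y : A, jn x (mt x y) = x) /\
  (forall x y : A, mt x (jn x y) = x) /\
  (forall x y z : A, mt x (jn y z) = jn (mt x y) (mt x z)) /\
  (forall x : A, jn x (bt A) = x) /\
  (forall x : A, mt x (tp A) = x) /\
  (forall x y : A, mt x y = bt A <-> ale y (st x)) /\
  (forall x : A, pr (pr x) = x) /\
  (forall x y : A, pr (jn x y) = mt (pr x) (pr y)) /\
  (forall x y : A, ale (mt x (pr (st (pr x)))) (jn y (st y))) /\
  (forall x y : A, ale (mt x (pr x)) (jn y (pr y))) /\
  (forall x : A, pst_iter 2 (mt x (st (pr x))) = pst_iter 3 (mt x (st (pr x)))).

Definition congruence (A : pdmAlg) (R : A -> A -> Prop) : Prop :=
  (forall x, R x x) /\ (forall x y, R x y -> R y x) /\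
  (forall x y z, R x y -> R y z -> R x z) /\
  (forall x y u v, R x y -> R u v -> R (jn x u) (jn y v)) /\
  (forall x y u v, R x y -> R u v -> R (mt x u) (mt y v)) /\
  (forall x y, R x y -> R (st x) (st y)) /\
  (forall x y, R x y -> R (pr x) (pr y)).

Definition simple_alg (A : pdmAlg) : Prop :=
  (exists x y : A, x <> y) /\
  forall R : A -> A -> Prop, @congruence A R -> (forall x y, R x y -> x = y) \/ (forall x y, R x y).

(* homomorphisms; A is isomorphic to a subalgebra of B iff there is an injective hom *)
Definition is_hom (A B : pdmAlg) (f : A -> B) : Prop :=
  (forall x y, f (jn x y) = jn (f x) (f y)) /\
  (forall x y, f (mt x y) = mt (f x) (f y)) /\
  f (bt A) = bt B /\ f (tp A) = tp B /\
  (forall x, f (st x) = st (f x)) /\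
  (forall x, f (pr x) = pr (f x)).

Definition embeds (A B : pdmAlg) : Prop :=
  exists f : A -> B, @is_hom A B f /\ injective f.

(* An element (c, (l, i)) : P n stands for:
     c = false : an element of S_n,  c = true : its copy zeta(.)
     l = false : letter a,           l = true : letter b
     i         : the index in {0,...,n-1}.  *)
Definition P (n : nat) : finType := (bool * (bool * 'I_n))%type.

Definition zeta n (x : P n) : P n := (~~ x.1, x.2).

Definition leP n (x y : P n) : bool :=
  (x == y) || [&& ~~ x.1, y.1 & (x.2.1 == y.2.1) || (x.2.2 != y.2.2)].

Definition downset n (X : {set P n}) : bool :=
  [forall x, forall y, ((y \in X) && leP x y) ==> (x \in X)].

Definition upgen n (X : {set P n}) : {set P n} := [set x | [exists y in X, leP y x]].

Definition Kst n (X : {set P n}) : {set P n} := ~: upgen X.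
Definition Kpr n (X : {set P n}) : {set P n} := ~: (@zeta n @: X).

Lemma zetaK n : involutive (@zeta n).
Proof. by case=> c [l i]; rewrite /zeta /= negbK. Qed.

Lemma mem_zeta n (X : {set P n}) y : (y \in @zeta n @: X) = (zeta y \in X).
Proof.
apply/imsetP/idP => [[x Hx ->]|H]; first by rewrite zetaK.
by exists (zeta y); rewrite ?zetaK.
Qed.

Lemma leP_trans n (x y z : P n) : leP x y -> leP y z -> leP x z.
Proof.
rewrite /leP; case/orP=> [/eqP -> //|H].
case/orP=> [/eqP <- |/and3P [H3 _ _]]; first by rewrite H orbT.
by case/and3P: H => _ H2 _; rewrite H2 in H3.
Qed.

Lemma leP_zeta n (x y : P n) : leP x y -> leP (zeta y) (zeta x).
Proof.
rewrite /leP; case/orP=> [/eqP -> //|/and3P [H1 H2 H3]]; first by rewrite eqxx.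
rewrite /zeta /= H1 H2 /= (eq_sym y.2.1) (eq_sym y.2.2). exact: H3.
Qed.

Lemma down_set0 n : downset (set0 : {set P n}).
Proof. rewrite /downset; by apply/forallP=> x; apply/forallP=> y; rewrite in_set0. Qed.

Lemma down_setT n : downset (setT : {set P n}).
Proof. rewrite /downset; by apply/forallP=> x; apply/forallP=> y; rewrite !in_setT implybT. Qed.

Lemma downP n (X : {set P n}) : downset X -> forall x y, y \in X -> leP x y -> x \in X.
Proof. by move=> /forallP H x y Hy Hxy; move: (forallP (H x) y); rewrite Hy Hxy. Qed.

Lemma downI n (X Y : {set P n}) : downset X -> downset Y -> downset (X :&: Y).
Proof.
move=> HX HY; rewrite /downset; apply/forallP=> x; apply/forallP=> y; apply/implyP.
case/andP; rewrite !inE => /andP [H1 H2] H.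
by rewrite (downP HX H1 H) (downP HY H2 H).
Qed.

Lemma downU n (X Y : {set P n}) : downset X -> downset Y -> downset (X :|: Y).
Proof.
move=> HX HY; rewrite /downset; apply/forallP=> x; apply/forallP=> y; apply/implyP.
case/andP; rewrite !inE => /orP [H1|H1] H.
  by rewrite (downP HX H1 H).
by rewrite (downP HY H1 H) orbT.
Qed.

Lemma down_st n (X : {set P n}) : downset (Kst X).
Proof.
rewrite /downset; apply/forallP=> x; apply/forallP=> y; apply/implyP.
rewrite /Kst /upgen !inE => /andP [Hy Hxy]; apply: contra Hy.
case/existsP=> z /andP [Hz Hzx]; apply/existsP; exists z.
by rewrite Hz (leP_trans Hzx Hxy).
Qed.

Lemma down_pr n (X : {set P n}) : downset X -> downset (Kpr X).
Proof.
move=> HX; rewrite /downset; apply/forallP=> x; apply/forallP=> y; apply/implyP.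
rewrite /Kpr !inE !mem_zeta => /andP [Hy Hxy]; apply: contra Hy => Hx.
exact: downP HX _ _ Hx (leP_zeta Hxy).
Qed.

Definition Kcar (n : nat) := {X : {set P n} | downset X}.

Definition Kalg (n : nat) : pdmAlg :=
  @PdmAlg (Kcar n)
    (fun X Y => exist _ (proj1_sig X :|: proj1_sig Y) (downU (proj2_sig X) (proj2_sig Y)))
    (fun X Y => exist _ (proj1_sig X :&: proj1_sig Y) (downI (proj2_sig X) (proj2_sig Y)))
    (exist _ set0 (@down_set0 n))
    (exist _ setT (@down_setT n))
    (fun X => exist _ (Kst (proj1_sig X)) (down_st (proj1_sig X)))
    (fun X => exist _ (Kpr (proj1_sig X)) (down_pr (proj2_sig X))).

(* In P_n a minimal point (false, u) lies below a maximal point (true, v) exactly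
   when v <> flip u, flip exchanging the letters a and b.  The first K_2 identities
   are checked pointwise on down-sets.  For the third, with Z = x /\ x'^*: if
   Z'^* contains a maximal point then Z = 1, and otherwise Z'^*'^* = 0; either
   way the iterates of X |-> X'^* are constant from the second one on.
   Simplicity: a congruence identifying two distinct elements identifies 0 with
   an atom {(false, u)} (meet with it), and three applications of X |-> X^*'
   send this atom to 1 while fixing 0.
   Rigidity: an embedding K_n -> K_m sends each atom to an element with exactly
   one minimal point (X |-> X^*'^* kills elements with two minimal points but not
   atoms), distinct atoms to disjoint elements, and the join of all atoms, whose
   pseudocomplement is 0, to an element containing every minimal point; this is a
   bijection between the 2n minimal points of P_n and the 2m of P_m. *)

From Pilot Require Import Defs.
From mathcomp Require Import all_boot.
From Stdlib Require Import Classical.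

Set Implicit Arguments. Unset Strict Implicit. Unset Printing Implicit Defensive.

Local Notation "x <=p y" := (Defs.leP x y) (at level 70, no associativity).

Section Poset.
Variable n : nat.
Implicit Types (x y : P n) (u v : bool * 'I_n) (W X : {set P n}).

Definition flip u : bool * 'I_n := (~~ u.1, u.2).

Lemma flipK : involutive flip.
Proof. by case=> l i; rewrite /flip negbK. Qed.

Lemma eq_flip u v : (v == flip u) = (u == flip v).
Proof. by apply/eqP/eqP => ->; rewrite flipK. Qed.

Lemma flip_neq u : u != flip u.
Proof. by case: u => [[] i]; rewrite /flip xpair_eqE. Qed.

Lemma leP_refl x : x <=p x.
Proof. by rewrite /Defs.leP eqxx. Qed.

Lemma leP_bot_top u v : ((false, u) : P n) <=p (true, v) = (v != flip u).
Proof.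
case: u v => [l i] [l' j]; rewrite /Defs.leP /flip /= xpair_eqE negb_and.
by case: l; case: l'; rewrite //= eq_sym.
Qed.

Lemma leP_top x y : x.1 -> (x <=p y) = (x == y).
Proof. by case: x => [[] p] //= _; rewrite /Defs.leP /= orbF. Qed.

Lemma leP_bot x y : x.1 = false -> (y <=p x) = (y == x).
Proof. by case: x => [[] p] //= _; rewrite /Defs.leP /= !andbF orbF. Qed.

Lemma leP_below x : ((false, x.2) : P n) <=p x.
Proof. by case: x => [[] u]; rewrite ?leP_refl // leP_bot_top flip_neq. Qed.

Lemma leP_zeta_total x : (x <=p zeta x) || (zeta x <=p x).
Proof. by case: x => [[] u]; rewrite /zeta /= leP_bot_top flip_neq ?orbT. Qed.

Lemma downset_tops W : downset W -> (forall u, (true, u) \in W) -> W = setT.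
Proof.
move=> hW tops; apply/setP => -[[] u]; rewrite inE ?tops //.
exact: downP hW _ _ (tops u) (leP_below (true, u)).
Qed.

Definition Kpst W := Kst (Kpr W).
Definition Kstp W := Kpr (Kst W).

Lemma mem_Kst W x : (x \in Kst W) = ~~ [exists y in W, y <=p x].
Proof. by rewrite !inE. Qed.

Lemma mem_Kpr W x : (x \in Kpr W) = (zeta x \notin W).
Proof. by rewrite inE mem_zeta. Qed.

Lemma mem_Kpst W x : (x \in Kpst W) = [forall y, (y <=p x) ==> (zeta y \in W)].
Proof.
rewrite mem_Kst negb_exists; apply: eq_forallb => y.
by rewrite mem_Kpr negb_and negbK implybE orbC.
Qed.

Lemma mem_Kstp W x : (x \in Kstp W) = [exists y in W, y <=p zeta x].
Proof. by rewrite mem_Kpr mem_Kst negbK. Qed.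

Lemma Kst_bot W x : downset W -> x.1 = false -> (x \in Kst W) = (x \notin W).
Proof.
move=> hW x0; rewrite mem_Kst; congr negb; apply/existsP/idP => [[y /andP [yW]]|xW].
  by rewrite leP_bot // => /eqP <-.
by exists x; rewrite xW leP_refl.
Qed.

Lemma Kst_eq0 W u : Kst W = set0 -> (false, u) \in W.
Proof.
move/setP/(_ (false, u)); rewrite mem_Kst inE => /negbFE/existsP [y /andP [yW]].
by rewrite leP_bot // => /eqP <-.
Qed.

Lemma downset_atom u : downset [set ((false, u) : P n)].
Proof.
apply/forallP => x; apply/forallP => y; apply/implyP => /andP [/set1P -> xu].
by rewrite inE -leP_bot.
Qed.

Lemma Kpst_setT : Kpst [set: P n] = setT.
Proof. by apply/setP => x; rewrite mem_Kpst inE; apply/forallP => y; rewrite inE implybT. Qed.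

Lemma Kpst_no_tops W : (forall u, (true, u) \notin W) -> Kpst W = set0.
Proof.
move=> noW; apply/setP => x; rewrite mem_Kpst inE; apply/forallPn.
by exists (false, x.2); rewrite negb_imply leP_below noW.
Qed.

Lemma Kstp_bottoms W : (forall u, (false, u) \in W) -> Kstp W = setT.
Proof.
move=> botW; apply/setP => x; rewrite mem_Kstp inE; apply/existsP.
by exists (false, x.2); rewrite botW (leP_below (zeta x)).
Qed.

Lemma Kpst_Kst_two_bottoms W u v : (false, u) \in W -> (false, v) \in W -> u != v ->
  Kpst (Kst W) = set0.
Proof.
move=> uW vW uv; apply/setP => x; rewrite mem_Kpst inE; apply/forallPn.
exists (false, x.2); rewrite negb_imply leP_below /= mem_Kst negbK; apply/existsP.
have [e|ne] := eqVneq x.2 (flip u); last by exists (false, u); rewrite uW leP_bot_top.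
by exists (false, v); rewrite vW leP_bot_top e (inj_eq (can_inj flipK)).
Qed.

Lemma Kpst_Kst_atom u : (false, flip u) \in Kpst (Kst [set (false, u)]).
Proof.
rewrite mem_Kpst; apply/forallP => y; apply/implyP; rewrite leP_bot // => /eqP -> /=.
by rewrite mem_Kst; apply/existsP => -[z /andP [/set1P -> /=]]; rewrite leP_bot_top eqxx.
Qed.

End Poset.

Lemma exists_ord_neq n (hn : 1 < n) (i : 'I_n) : exists j : 'I_n, j != i.
Proof.
have [->|ne] := eqVneq i (Ordinal hn); first by exists (Ordinal (ltnW hn)).
by exists (Ordinal hn); rewrite eq_sym.
Qed.

Lemma Kstp2_atom_bottoms n (hn : 1 < n) (u v : bool * 'I_n) :
  (false, v) \in Kstp (Kstp [set (false, u)]).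
Proof.
have atom_below w : w != flip u -> (false, w) \in Kstp [set (false, u)].
  by move=> wu; rewrite mem_Kstp; apply/existsP; exists (false, u); rewrite set11 leP_bot_top.
rewrite mem_Kstp; apply/existsP.
have [->|vu] := eqVneq v (flip u); last first.
  by exists (false, v); rewrite atom_below //= leP_bot_top flip_neq.
have [j hj] := exists_ord_neq hn u.2.
exists (false, (u.1, j)); rewrite atom_below /= ?leP_bot_top;
  by rewrite /flip /= xpair_eqE ?(eq_sym u.2) (negbTE hj) andbF.
Qed.

Lemma Kpst_top_full n (hn : 1 < n) (X : {set P n}) u : downset X ->
  (true, u) \in Kpst (X :&: Kpst X) -> X :&: Kpst X = setT.
Proof.
set Z := X :&: Kpst X => hX /[!mem_Kpst] /forallP hu.
have ZX y : y \in Z -> y \in X by rewrite inE => /andP [].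
have Z_top v : v != flip u -> (true, v) \in Z.
  by move=> hv; apply: (implyP (hu (false, v))); rewrite leP_bot_top eq_flip.
have [j hj] := exists_ord_neq hn u.2.
have X_flip : (true, flip u) \in X.
  have hw : (u.1, j) != flip u by rewrite /flip xpair_eqE (negbTE hj) andbF.
  have /setIP [_] := Z_top _ hw.
  rewrite mem_Kpst => /forallP /(_ (false, flip u)) /implyP; apply.
  by rewrite leP_bot_top flipK; apply: contra hj => /eqP <-.
apply: downset_tops => [|v]; first by apply: downI => //; apply: down_st.
have [->|] := eqVneq v (flip u); last exact: Z_top.
rewrite inE X_flip mem_Kpst; apply/forallP => -[[] w]; apply/implyP.
  by rewrite leP_top // => /eqP [->]; apply: downP hX _ _ X_flip (leP_below _).
by have [->|/Z_top/ZX] := eqVneq w (flip u).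
Qed.

Lemma hom_foldr_jn (A B : pdmAlg) (f : A -> B) (s : seq A) : is_hom f ->
  f (foldr (@jn A) (bt A) s) = foldr (@jn B) (bt B) (map f s).
Proof. by case=> fj [_ [fb _]]; elim: s => [|x s IH] //=; rewrite fj IH. Qed.

Lemma congruence_full (A : pdmAlg) (R : A -> A -> Prop) : congruence R ->
  (forall x : A, mt x (tp A) = x) -> (forall x : A, mt x (bt A) = bt A) ->
  R (bt A) (tp A) -> forall x y, R x y.
Proof.
move=> [Rr [Rs [Rt [_ [Rm _]]]]] mt1 mt0 R01.
have R0 x : R (bt A) x by have := Rm _ _ _ _ (Rr x) R01; rewrite mt1 mt0.
by move=> x y; apply: Rt (Rs _ _ (R0 x)) (R0 y).
Qed.

Section Algebra.
Variable n : nat.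
Implicit Types (x y : Kalg n) (u : bool * 'I_n).

Lemma val_downset x : downset (val x).
Proof. exact: valP. Qed.

Lemma val_jn x y : val (jn x y) = val x :|: val y. Proof. by []. Qed.
Lemma val_mt x y : val (mt x y) = val x :&: val y. Proof. by []. Qed.
Lemma val_bt : val (bt (Kalg n)) = set0. Proof. by []. Qed.
Lemma val_tp : val (tp (Kalg n)) = setT. Proof. by []. Qed.
Lemma val_st x : val (st x) = Kst (val x). Proof. by []. Qed.
Lemma val_pr x : val (pr x) = Kpr (val x). Proof. by []. Qed.
Definition valE := (val_jn, val_mt, val_bt, val_tp, val_st, val_pr).

Lemma val_pst_iter k x : val (pst_iter k x) = iter k (@Kpst n) (val x).
Proof. by elim: k => //= k ->. Qed.

Lemma ale_subset x y : {subset val x <= val y} -> ale x y.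
Proof. by move=> sub; apply: val_inj; rewrite val_mt; apply/setIidPl/subsetP. Qed.

Lemma Kalg_pseudocompl x y : mt x y = bt (Kalg n) <-> ale y (st x).
Proof.
split=> [/(congr1 val) xy0 | yx].
  apply: ale_subset => z zy; rewrite val_st mem_Kst; apply/existsP => -[w /andP [wx wz]].
  have : w \in val (mt x y) by rewrite val_mt inE wx (downP (val_downset y) zy wz).
  by rewrite xy0 inE.
apply: val_inj; apply/setP => z; rewrite !valE !inE; apply/andP => -[zx zy].
have /setIP [_] : z \in val (mt y (st x)) by rewrite yx.
by rewrite val_st mem_Kst => /existsP; apply; exists z; rewrite zx leP_refl.
Qed.

Lemma Kalg_ineq_st x y : ale (mt x (pr (st (pr x)))) (jn y (st y)).
Proof.
apply: ale_subset => z; rewrite !valE in_setI in_setU => /andP [zx].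
rewrite mem_Kpr mem_Kst negbK => /existsP [q /andP [qX]].
case: z zx => [[] u] zx; last by rewrite Kst_bot ?orbN // val_downset.
by rewrite leP_bot // => /eqP qE; move: qX; rewrite qE mem_Kpr /= zx.
Qed.

Lemma Kalg_ineq_pr x y : ale (mt x (pr x)) (jn y (pr y)).
Proof.
apply: ale_subset => z; rewrite !valE in_setI in_setU !mem_Kpr => /andP [zx zx'].
apply/norP => -[zy /negbNE zy']; have := leP_zeta_total z; apply/negP/norP; split.
  by apply: contra zy => /(downP (val_downset y) zy').
by apply: contra zx' => /(downP (val_downset x) zx).
Qed.

Lemma Kalg_pst_stable (hn : 1 < n) x :
  pst_iter 2 (mt x (st (pr x))) = pst_iter 3 (mt x (st (pr x))).
Proof.
apply: val_inj; rewrite !val_pst_iter /=.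
set Z := val x :&: Kpst (val x).
have [/existsP [u top]|notop] := boolP [exists u, (true, u) \in Kpst Z].
  by rewrite /Z (Kpst_top_full hn (val_downset x) top) !Kpst_setT.
rewrite [Kpst (Kpst Z)]Kpst_no_tops => [|u]; last first.
  by apply: contraNN notop => top; apply/existsP; exists u.
by rewrite Kpst_no_tops // => u; rewrite inE.
Qed.

Lemma Kalg_in_K2 (hn : 1 < n) : in_K2 (Kalg n).
Proof.
split; first by move=> *; apply: val_inj; rewrite !valE setUA.
split; first by move=> *; apply: val_inj; rewrite !valE setIA.
split; first by move=> *; apply: val_inj; rewrite !valE setUC.
split; first by move=> *; apply: val_inj; rewrite !valE setIC.
split; first by move=> *; apply: val_inj; rewrite !valE setIC setKI.
split; first by move=> *; apply: val_inj; rewrite !valE setUC setKU.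
split; first by move=> *; apply: val_inj; rewrite !valE setIUr.
split; first by move=> *; apply: val_inj; rewrite !valE setU0.
split; first by move=> *; apply: val_inj; rewrite !valE setIT.
split; first exact: Kalg_pseudocompl.
split; first by move=> x; apply: val_inj; apply/setP => z; rewrite !valE !mem_Kpr zetaK negbK.
split; first by move=> x y; apply: val_inj; apply/setP => z;
  rewrite !valE !in_setI !mem_Kpr in_setU negb_or.
split; first exact: Kalg_ineq_st.
split; first exact: Kalg_ineq_pr.
exact: Kalg_pst_stable.
Qed.

Definition atom u : Kalg n := exist _ [set (false, u)] (downset_atom u).

Lemma val_atom u : val (atom u) = [set (false, u)]. Proof. by []. Qed.

Lemma Kalg_bt_neq_tp : 0 < n -> bt (Kalg n) <> tp (Kalg n).
Proof. by move=> n0 /(congr1 val) /setP /(_ (false, (false, Ordinal n0))); rewrite !inE. Qed.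

Lemma mt_atom x u : mt x (atom u) = if (false, u) \in val x then atom u else bt (Kalg n).
Proof.
apply: val_inj; rewrite val_mt; case: ifP => ux; apply/setP => z; rewrite !inE.
  by apply/andb_idl => /eqP ->.
by apply/negP => /andP [zx /eqP zu]; rewrite -zu zx in ux.
Qed.

Lemma stp_bt : pr (st (bt (Kalg n))) = bt (Kalg n).
Proof.
apply: val_inj; apply/setP => x; rewrite !valE mem_Kpr mem_Kst negbK inE.
by apply/existsP => -[y]; rewrite inE.
Qed.

Lemma stp3_atom (hn : 1 < n) u : pr (st (pr (st (pr (st (atom u)))))) = tp (Kalg n).
Proof. by apply: val_inj; apply: Kstp_bottoms => v; apply: Kstp2_atom_bottoms. Qed.

Lemma bottom_separation x y : x <> y -> exists u,
  ((false, u) \in val x) != ((false, u) \in val y) \/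
  ((false, u) \in val (pr x)) != ((false, u) \in val (pr y)).
Proof.
move=> nxy; have /existsP [[c u] sep] : [exists p, (p \in val x) != (p \in val y)].
  apply: contraT => /existsPn same; case: nxy; apply: val_inj.
  by apply/setP => p; apply/eqP/negPn/same.
exists u; case: c sep => sep; [right | by left].
by rewrite !val_pr !mem_Kpr /zeta /=; case: (_ \in val x) sep; case: (_ \in val y).
Qed.

Lemma Kalg_simple (hn : 1 < n) : simple_alg (Kalg n).
Proof.
split; first by exists (bt (Kalg n)), (tp (Kalg n)); apply: Kalg_bt_neq_tp; apply: ltnW.
move=> R congR; have [Rr [Rs [_ [_ [Rm [Rst Rpr]]]]]] := congR.
have [[x [y [Rxy nxy]]]|noR] := classic (exists x y, R x y /\ x <> y); last first.
  by left => x y Rxy; apply: NNPP => nxy; apply: noR; exists x, y.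
right; apply: congruence_full => // [z|z|];
  try by apply: val_inj; rewrite !valE ?setIT ?setI0.
have [u [x' [y' [Rxy' sep]]]] : exists u (x' y' : Kalg n),
    R x' y' /\ ((false, u) \in val x') != ((false, u) \in val y').
  have [u [sep|sep]] := bottom_separation nxy; exists u; first by exists x, y.
  by exists (pr x), (pr y); split; first exact: Rpr.
have R0u : R (bt (Kalg n)) (atom u).
  have := Rm _ _ _ _ Rxy' (Rr (atom u)); rewrite !mt_atom.
  by case: (_ \in val x') sep; case: (_ \in val y') => // _ /Rs.
have Rstp z : R (bt (Kalg n)) z -> R (bt (Kalg n)) (pr (st z)).
  by move=> /Rst /Rpr; rewrite stp_bt.
by rewrite -(stp3_atom hn u); apply/Rstp/Rstp/Rstp.
Qed.

Lemma atom_neq_bt u : atom u <> bt (Kalg n).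
Proof. by move=> /(congr1 val) /setP /(_ (false, u)); rewrite val_atom val_bt !inE eqxx. Qed.

Lemma stpst_atom_neq_bt u : st (pr (st (atom u))) <> bt (Kalg n).
Proof.
move=> e; have := Kpst_Kst_atom u.
by rewrite -[Kpst _]/(val (st (pr (st (atom u))))) e val_bt inE.
Qed.

Definition all_atoms : Kalg n :=
  foldr (@jn (Kalg n)) (bt (Kalg n)) [seq atom u | u : bool * 'I_n].

Lemma mem_foldr_jn (s : seq (Kalg n)) p :
  (p \in val (foldr (@jn (Kalg n)) (bt (Kalg n)) s)) = has (fun x => p \in val x) s.
Proof.
elim: s => [|x s IH]; first by rewrite val_bt inE.
by rewrite [foldr _ _ _]/= val_jn in_setU IH.
Qed.

Lemma st_all_atoms : st all_atoms = bt (Kalg n).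
Proof.
apply: val_inj; apply/setP => p; rewrite val_st val_bt mem_Kst inE negbK.
apply/existsP; exists (false, p.2); rewrite leP_below andbT mem_foldr_jn.
by apply/hasP; exists (atom p.2); rewrite ?map_f ?mem_enum // val_atom set11.
Qed.

End Algebra.

Section Embedding.
Variables (n m : nat) (f : Kalg n -> Kalg m).
Hypotheses (hom_f : is_hom f) (inj_f : injective f).

Lemma atom_image_bottom u : exists v, (false, v) \in val (f (atom u)).
Proof.
have [_ [_ [fb _]]] := hom_f.
have /set0Pn [p pf] : val (f (atom u)) != set0.
  apply/eqP => f0; apply: (@atom_neq_bt n u); apply: inj_f; apply: val_inj.
  by rewrite f0 fb.
by exists p.2; apply: downP (val_downset _) _ _ pf (leP_below p).
Qed.

Lemma atom_image_bottom_uniq u v w :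
  (false, v) \in val (f (atom u)) -> (false, w) \in val (f (atom u)) -> v = w.
Proof.
move=> fv fw; apply/eqP; apply: contraT => vw; case: (@stpst_atom_neq_bt n u).
have [_ [_ [fb [_ [fst fpr]]]]] := hom_f.
apply: inj_f; rewrite fst fpr fst fb; apply: val_inj.
exact: Kpst_Kst_two_bottoms fv fw vw.
Qed.

Lemma atom_images_disjoint u u' v :
  (false, v) \in val (f (atom u)) -> (false, v) \in val (f (atom u')) -> u = u'.
Proof.
move=> fu fu'; apply/eqP; apply: contraT => uu'.
have [_ [fm [fb _]]] := hom_f.
have : mt (atom u) (atom u') = bt (Kalg n).
  by rewrite mt_atom val_atom inE xpair_eqE /= eq_sym (negbTE uu').
move/(congr1 f); rewrite fm fb => /(congr1 val) /setP /(_ (false, v)).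
by rewrite !valE in_setI fu fu' inE.
Qed.

Lemma atom_images_cover v : exists u, (false, v) \in val (f (atom u)).
Proof.
have [_ [_ [fb [_ [fst _]]]]] := hom_f.
have : st (f (all_atoms n)) = bt (Kalg m) by rewrite -fst st_all_atoms fb.
rewrite /all_atoms (hom_foldr_jn _ hom_f) -map_comp.
move=> /(congr1 val); rewrite val_st val_bt => /(@Kst_eq0 _ _ v).
by rewrite mem_foldr_jn => /hasP [_ /mapP [u _ ->] fu]; exists u.
Qed.

Lemma card_labels_embed : #|{: bool * 'I_n}| = #|{: bool * 'I_m}|.
Proof.
pose g u := xchoose (atom_image_bottom u).
have gP u : (false, g u) \in val (f (atom u)) := xchooseP (atom_image_bottom u).
have g_inj : injective g.
  by move=> u u' e; apply: (atom_images_disjoint (gP u)); rewrite e gP.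
rewrite -(card_codom g_inj); apply: eq_card => v; rewrite inE.
have [u fu] := atom_images_cover v.
by rewrite (atom_image_bottom_uniq fu (gP u)) codom_f.
Qed.

End Embedding.

Theorem embeds_Kalg_eq n m : embeds (Kalg n) (Kalg m) -> n = m.
Proof.
case=> f [hom_f inj_f]; have := card_labels_embed hom_f inj_f.
by rewrite !card_prod !card_bool !card_ord => /eqP; rewrite eqn_pmul2l // => /eqP.
Qed.

Theorem lemma6p2 :
  (forall n : nat, 2 <= n -> in_K2 (Kalg n) /\ simple_alg (Kalg n)) /\
  (forall n m : nat, 2 <= n -> 2 <= m -> embeds (Kalg n) (Kalg m) -> n = m).
Proof.
split=> [n hn | n m _ _]; first by split; [apply: Kalg_in_K2 | apply: Kalg_simple].
exact: embeds_Kalg_eq.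
Qed.
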